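(* Let $(M,g,S)$, $p$, $u$, $\varphi$, $\alpha_1$ and $e_1,e_2,e_3$ be as in the context. Give each $v\in\alpha_1$ coordinates $(x,y,z)$ by $v=xe_1+ye_2+ze_3$. For $a\in\mathbb R$, the sphere $s_1=\{v\in\alpha_1:\tilde g(v,v)=a\}$ has the equation $$2(\cos\varphi)(x^2-y^2+z^2)+2\sqrt{1-2\cos^2\varphi}\,(xy+yz)=a.$$
   Context: $M$ is a 4-dimensional differentiable manifold with a positive definite metric $g$ and a tensor field $S$ of type $(1,1)$ whose components in some local coordinate system form the matrix with rows $(0,1,0,0)$, $(0,0,1,0)$, $(0,0,0,1)$, $(-1,0,0,0)$; hence $S^4=-\mathrm{id}$, and $g(Su,Sv)=g(u,v)$ for all vector fields $u,v$. The associated metric is $\tilde g(u,v)=g(u,Sv)+g(Su,v)$. Here $p\in M$, $u\in T_pM$ is a $g$-unit vector such that $\{u,Su,S^2u,S^3u\}$ is a basis of $T_pM$, $\varphi=\angle(u,Su)$ (so $\cos\varphi=g(u,Su)$; it is known that $\frac{\pi}{4}<\varphi<\frac{3\pi}{4}$), $\alpha_1=\mathrm{span}\{u,Su,S^2u\}$, and $e_1=u$, $e_2=\frac{(-\cos\varphi)u+Su-(\cos\varphi)S^2u}{\sqrt{1-2\cos^2\varphi}}$, $e_3=S^2u$ (a $g$-orthonormal basis of $\alpha_1$). *)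

From HB Require Import structures.
From mathcomp Require Import all_boot all_order all_algebra.
From mathcomp Require Import all_classical all_reals all_analysis.
Set Implicit Arguments. Unset Strict Implicit. Unset Printing Implicit Defensive.
Import Order.TTheory GRing.Theory Num.Theory.
Local Open Scope ring_scope.

(* T_pM is modelled by 'cV[R]_4 (coordinates w.r.t. the local coordinate
   frame at p); the metric g at p is given by its Gram matrix G. *)
Definition gform {R : realType} (G : 'M[R]_4) (u v : 'cV[R]_4) : R :=
  (u^T *m G *m v) 0 0.

(* The structure S at p: rows (0,1,0,0),(0,0,1,0),(0,0,0,1),(-1,0,0,0). *)
Definition Smx {R : realType} : 'M[R]_4 :=
  \matrix_(i < 4, j < 4)
    (if (i < 3)%N then (if j == i.+1 :> nat then 1 else 0)
     else (if j == 0 :> nat then -1 else 0)).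

Definition Sop {R : realType} (v : 'cV[R]_4) : 'cV[R]_4 := Smx *m v.

Definition gtilde {R : realType} (G : 'M[R]_4) (u v : 'cV[R]_4) : R :=
  gform G u (Sop v) + gform G (Sop u) v.

Definition Sframe {R : realType} (u : 'cV[R]_4) : 'M[R]_4 :=
  \matrix_(i < 4, j < 4) ((Smx ^+ j *m u) i 0).

From HB Require Import structures.
From mathcomp Require Import all_boot all_order all_algebra.
From mathcomp Require Import all_classical all_reals all_analysis.
From mathcomp Require Import ring lra.
Set Implicit Arguments. Unset Strict Implicit.
Import Order.TTheory GRing.Theory Num.Theory.
Local Open Scope ring_scope.

(* Since S is a g-isometry with S^4 = -id and g is symmetric, g(S^i u, S^j u)
   only depends on j - i, and equals 1, cos φ, 0, -cos φ for j - i = 0, 1, 2, 3.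
   Hence on α₁ = span{u, Su, S²u} both g(v,v) and g~(v,v) = 2 g(v, Sv) are
   explicit quadratic forms in the coefficients of v, and substituting the
   coordinates of e₁, e₂, e₃ gives the equation of the sphere.  The radicand
   1 - 2cos²φ is the squared g-length of the nonzero vector
   cos φ u - Su + cos φ S²u. *)

Section Sop.
Variable R : realType.
Implicit Types v w : 'cV[R]_4.

Lemma SopD v w : Sop (v + w) = Sop v + Sop w.
Proof. exact: mulmxDr. Qed.

Lemma SopZ a v : Sop (a *: v) = a *: Sop v.
Proof. by rewrite /Sop scalemxAr. Qed.

Lemma SopE v (i : 'I_4) : Sop v i 0 = if i == 3 then - v 0 0 else v (i + 1) 0.
Proof.
rewrite /Sop mxE !big_ord_recl big_ord0 !mxE /=.
case: i => [[|[|[|[|//]]]] ?] /=; rewrite !(mul0r, mul1r, mulN1r, add0r, addr0) //;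
  by congr (v _ 0); apply/val_inj.
Qed.

Lemma Sop4 v : Sop (Sop (Sop (Sop v))) = - v.
Proof.
apply/matrixP => i j; rewrite ord1 [RHS]mxE.
by case: i => [[|[|[|[|//]]]] ?]; rewrite !SopE /= ?opprK; congr (- v _ 0); apply/val_inj.
Qed.

Lemma Sframe_mulmx (u : 'cV[R]_4) (a0 a1 a2 a3 : R) :
  Sframe u *m \col_(j < 4) [:: a0; a1; a2; a3]`_j
  = a0 *: u + a1 *: Sop u + a2 *: Sop (Sop u) + a3 *: Sop (Sop (Sop u)).
Proof.
set a := \col_j _.
have -> : Sframe u *m a = \sum_(j < 4) a j 0 *: (Smx ^+ j *m u).
  apply/matrixP => i k; rewrite ord1 [LHS]mxE summxE; apply: eq_bigr => j _.
  by rewrite [Sframe _ _ _]mxE [RHS]mxE mulrC.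
rewrite !big_ord_recl big_ord0 addr0 !mxE /Sop !exprS expr0 !mulr1 -!mulmxE.
by rewrite -!mulmxA mul1mx !addrA.
Qed.

Definition Scomb (u : 'cV[R]_4) (a0 a1 a2 : R) : 'cV[R]_4 :=
  a0 *: u + a1 *: Sop u + a2 *: Sop (Sop u).

Lemma Scomb_eq0 (u : 'cV[R]_4) a0 a1 a2 : Sframe u \in unitmx ->
  Scomb u a0 a1 a2 = 0 -> [/\ a0 = 0, a1 = 0 & a2 = 0].
Proof.
move=> Sframe_unit Sc0.
have := Sframe_mulmx u a0 a1 a2 0; rewrite scale0r addr0 -/(Scomb u a0 a1 a2) Sc0.
move/(congr1 (mulmx (invmx (Sframe u)))); rewrite mulKmx // mulmx0 => /matrixP a0E.
by move: (a0E 0 0) (a0E 1 0) (a0E 2 0); rewrite !mxE.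
Qed.

End Sop.

Section Form.
Variables (R : realType) (G : 'M[R]_4).
Implicit Types v w : 'cV[R]_4.

Lemma gformDl v1 v2 w : gform G (v1 + v2) w = gform G v1 w + gform G v2 w.
Proof. by rewrite /gform linearD /= !mulmxDl mxE. Qed.

Lemma gformDr v w1 w2 : gform G v (w1 + w2) = gform G v w1 + gform G v w2.
Proof. by rewrite /gform mulmxDr mxE. Qed.

Lemma gformZl a v w : gform G (a *: v) w = a * gform G v w.
Proof. by rewrite /gform linearZ /= -!scalemxAl mxE. Qed.

Lemma gformZr a v w : gform G v (a *: w) = a * gform G v w.
Proof. by rewrite /gform -scalemxAr mxE. Qed.

Lemma gformNr v w : gform G v (- w) = - gform G v w.
Proof. by rewrite -scaleN1r gformZr mulN1r. Qed.

Hypothesis G_sym : G^T = G.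

Lemma gformC v w : gform G v w = gform G w v.
Proof.
transitivity ((v^T *m G *m w)^T 0 0); first by rewrite [RHS]mxE.
by rewrite !trmx_mul !trmxK G_sym mulmxA.
Qed.

Lemma gtilde_diag v : gtilde G v v = 2 * gform G v (Sop v).
Proof. by rewrite /gtilde (gformC (Sop v) v) mulr2n mulrDl mul1r. Qed.

Hypothesis G_Sinv : forall v w, gform G (Sop v) (Sop w) = gform G v w.

(* g(v, S²v) = g(S²v, S⁴v) = -g(S²v, v) = -g(v, S²v). *)
Lemma gform_S2 v : gform G v (Sop (Sop v)) = 0.
Proof.
have : gform G v (Sop (Sop v)) = - gform G v (Sop (Sop v)).
  by rewrite -[LHS]G_Sinv -[LHS]G_Sinv Sop4 gformNr gformC.
lra.
Qed.

Lemma gform_S3 v : gform G v (Sop (Sop (Sop v))) = - gform G v (Sop v).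
Proof. by rewrite -G_Sinv Sop4 gformNr gformC. Qed.

Variable u : 'cV[R]_4.
Hypothesis u_unit : gform G u u = 1.
Local Notation c := (gform G u (Sop u)).

Lemma gform_Scomb a0 a1 a2 :
  gform G (Scomb u a0 a1 a2) (Scomb u a0 a1 a2)
  = a0 ^+ 2 + a1 ^+ 2 + a2 ^+ 2 + 2 * c * (a0 * a1 + a1 * a2).
Proof.
rewrite /Scomb !(gformDl, gformDr, gformZl, gformZr) !G_Sinv.
rewrite (gformC (Sop u) u) (gformC (Sop (Sop u)) u) gform_S2 u_unit.
ring.
Qed.

Lemma gtilde_Scomb a0 a1 a2 :
  gtilde G (Scomb u a0 a1 a2) (Scomb u a0 a1 a2)
  = 2 * (c * (a0 ^+ 2 + a1 ^+ 2 + a2 ^+ 2) + a1 * (a0 + a2)).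
Proof.
rewrite gtilde_diag /Scomb !(SopD, SopZ) !(gformDl, gformDr, gformZl, gformZr).
rewrite !G_Sinv (gformC (Sop u) u) gform_S2 gform_S3 u_unit.
ring.
Qed.

Hypothesis G_pos : forall v, v != 0 -> 0 < gform G v v.
Hypothesis Sframe_unit : Sframe u \in unitmx.

Lemma gform_S_sqr_lt_half : 2 * c ^+ 2 < 1.
Proof.
rewrite -subr_gt0.
have <- : gform G (Scomb u c (-1) c) (Scomb u c (-1) c) = 1 - 2 * c ^+ 2.
  by rewrite gform_Scomb; ring.
apply: G_pos; apply/eqP => /(Scomb_eq0 Sframe_unit) [_ /eqP].
by rewrite oppr_eq0 oner_eq0.
Qed.

End Form.

Theorem theorem4p2 (R : realType) (G : 'M[R]_4) (u : 'cV[R]_4) (phi : R) :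
  G^T = G ->
  (forall v : 'cV[R]_4, v != 0 -> 0 < gform G v v) ->
  (forall v w : 'cV[R]_4, gform G (Sop v) (Sop w) = gform G v w) ->
  gform G u u = 1 ->
  Sframe u \in unitmx ->
  cos phi = gform G u (Sop u) ->
  pi / 4 < phi < 3 * pi / 4 ->
  let e1 := u in
  let e2 := (Num.sqrt (1 - 2 * cos phi ^+ 2))^-1 *:
              ((- cos phi) *: u + Sop u - cos phi *: Sop (Sop u)) in
  let e3 := Sop (Sop u) in
  forall a x y z : R,
    gtilde G (x *: e1 + y *: e2 + z *: e3) (x *: e1 + y *: e2 + z *: e3) = a
    <->
    2 * cos phi * (x ^+ 2 - y ^+ 2 + z ^+ 2)
      + 2 * Num.sqrt (1 - 2 * cos phi ^+ 2) * (x * y + y * z) = a.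
Proof.
move=> G_sym G_pos G_Sinv u_unit Sframe_unit cos_phi _ e1 e2 e3 a x y z.
rewrite {}/e1 {}/e2 {}/e3 {}cos_phi.
set c := gform G u (Sop u); set s := Num.sqrt _.
have c_lt : 2 * c ^+ 2 < 1 by exact: gform_S_sqr_lt_half.
have s_gt0 : 0 < s by rewrite sqrtr_gt0 subr_gt0.
have s_sqr : s ^+ 2 = 1 - 2 * c ^+ 2 by rewrite sqr_sqrtr // subr_ge0 ltW.
have -> : y = s * (s^-1 * y) by rewrite mulVKf ?gt_eqF.
move: (s^-1 * y) => t.
have -> : x *: u + (s * t) *: (s^-1 *: (- c *: u + Sop u - c *: Sop (Sop u)))
          + z *: Sop (Sop u) = Scomb u (x - c * t) t (z - c * t).
  rewrite scalerA mulrAC mulfV ?gt_eqF // mul1r /Scomb.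
  (* Generalizing Su and S²u keeps mxE from unfolding the products Smx *m _. *)
  by move: (Sop (Sop u)) (Sop u) => S2u Su; apply/matrixP => i j; rewrite !mxE; ring.
have -> : 2 * s * (x * (s * t) + s * t * z) = 2 * s ^+ 2 * (t * (x + z)) by ring.
by rewrite gtilde_Scomb // -/c exprMn s_sqr; split=> <-; ring.
Qed.
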